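(* Let $k,n$ be positive integers and $\gamma>0$. Let $\preceq_k$ be a quasi-order on $[k]=\{1,\dots,k\}$ and $\preceq$ a quasi-order on $[kn]$. Assume that there are at least $\gamma k n^k$ tuples $(s_1,\dots,s_k)\in\prod_{i=1}^k[(i-1)n+1,in]$ such that $s_i\preceq s_j\iff i\preceq_k j$ for all $i,j\in[k]$. Then there are sets $S_i\subseteq[(i-1)n+1,in]$ ($1\le i\le k$), each of size at least $\gamma n$, such that for every tuple $(s_1,\dots,s_k)\in\prod_{i=1}^k S_i$ and all $i,j\in[k]$ we have $s_i\preceq s_j\iff i\preceq_k j$.
   Context: A quasi-order here means a total preorder (a reflexive, transitive and total relation). $[a,b]$ denotes the set of integers $m$ with $a\le m\le b$. *)

From mathcomp Require Import all_boot all_order all_algebra.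
Set Implicit Arguments. Unset Strict Implicit. Unset Printing Implicit Defensive.

Definition quasi_order (T : finType) (le : rel T) : Prop :=
  reflexive le /\ transitive le /\ total le.

(* 0-based encoding: [k] = {1..k} is 'I_k (i <-> i+1), [kn] is 'I_(k*n)
   (m <-> m+1).  Block i (0-based) of [kn] is {i*n, ..., i*n + n - 1},
   i.e. the 0-based version of [(i-1)n+1, in] for the 1-based index i+1. *)
Definition in_block (k n : nat) (i : 'I_k) (m : 'I_(k * n)) : bool :=
  (i * n <= m) && (m < i * n + n).

Definition respects (k n : nat) (lek : rel 'I_k) (le : rel 'I_(k * n))
  (s : 'I_k -> 'I_(k * n)) : bool :=
  [forall i, forall j, le (s i) (s j) == lek i j].

Definition good_tuples (k n : nat) (lek : rel 'I_k) (le : rel 'I_(k * n))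
  : {set {ffun 'I_k -> 'I_(k * n)}} :=
  [set s : {ffun 'I_k -> 'I_(k * n)} |
     [forall i, @in_block k n i (s i)] && respects lek le s].

(* Both quasi-orders are read through rank functions (the number of elements
   below a point).  For a good tuple s, coordinate i may be moved within its
   block anywhere between its own rank and a floor fixed by the other
   coordinates: strictly above the s_j with j below i, and at least as high as
   the s_j tied with i.  Every tuple drawn from these windows is good, so we are
   done if for some good s all windows have at least gamma n elements.
   Otherwise each good s has a coordinate i for which s_i lies in the set of
   points whose window would be small; that set depends only on the other
   coordinates and has fewer than gamma n elements, since windows are nested.
   Fixing the other coordinates and counting, fewer than gamma n^k tuples are
   bad at i, hence fewer than gamma k n^k tuples are good. *)

From mathcomp Require Import all_boot all_order all_algebra ring.
Import Order.TTheory GRing.Theory Num.Theory.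

Set Implicit Arguments.
Unset Strict Implicit.
Unset Printing Implicit Defensive.

Local Open Scope ring_scope.

Definition rank (T : finType) (le : rel T) (x : T) : nat := #|[set z | le z x]|.

Lemma rank_leE (T : finType) (le : rel T) : quasi_order le ->
  forall x y, le x y = (rank le x <= rank le y)%N.
Proof.
case=> le_refl [le_trans le_total] x y; apply/idP/idP => [lexy|].
  by apply: subset_leq_card; apply/subsetP=> z; rewrite !inE => /le_trans; apply.
apply: contraTT => nlexy; rewrite -ltnNge; apply: proper_card; apply/properP.
have leyx : le y x by case/orP: (le_total x y) => // lexy; rewrite lexy in nlexy.
split; first by apply/subsetP=> z; rewrite !inE => /le_trans; apply.
by exists x; rewrite !inE ?le_refl.
Qed.

Definition lowset (T : finType) (A : {set T}) (f : T -> nat) (x : T) : {set T} :=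
  [set y in A | (f y <= f x)%N].

Lemma card_small_lowsets (R : numDomainType) (T : finType) (A : {set T})
    (f : T -> nat) (c : R) :
  0 < c -> #|[set x in A | #|lowset A f x|%:R < c]|%:R < c.
Proof.
(* The lowsets are nested, so the set lies in the lowset of its f-maximal point. *)
move=> c_gt0; set P := [set x in A | _].
have [->|[x0 Px0]] := set_0Vmem P; first by rewrite cards0.
case: (arg_maxnP f Px0) => xm Pxm xm_max.
apply: le_lt_trans (_ : #|lowset A f xm|%:R < c).
  rewrite ler_nat; apply: subset_leq_card; apply/subsetP=> y Py.
  by rewrite inE [(f y <= _)%N](xm_max y Py) andbT; case/setIdP: Py.
by case/setIdP: Pxm.
Qed.

Section Box.
Variables (I T : finType) (B : I -> {set T}).

Definition box := [set s : {ffun I -> T} | [forall i, s i \in B i]].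

Lemma card_box : #|box| = (\prod_i #|B i|)%N.
Proof.
rewrite (eq_card (B := family (fun i => mem (B i)))); last first.
  by move=> s; rewrite inE; apply/forallP/familyP => h i; rewrite ?inE; exact: h.
by rewrite card_family foldrE big_map big_enum.
Qed.

Lemma card_box_hit (i : I) (Z : {ffun I -> T} -> {set T}) :
    (forall s s' : {ffun I -> T}, (forall j, j != i -> s j = s' j) -> Z s = Z s') ->
  (#|[set s in box | s i \in Z s]| * #|B i| = \sum_(s in box) #|Z s :&: B i|)%N.
Proof.
move=> Z_local.
(* This involution of box * B i exchanges the conditions [s i \in Z s] and
   [x \in Z s]. *)
pose swap (p : {ffun I -> T} * T) := ([ffun j => if j == i then p.2 else p.1 j], p.1 i).
have swapK : involutive swap.
  case=> s x; rewrite /swap /= ffunE eqxx; congr pair.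
  by apply/ffunP=> j; rewrite !ffunE; case: eqP => // ->.
have -> : (\sum_(s in box) #|Z s :&: B i| =
           #|[set p | (p.1 \in box) && (p.2 \in Z p.1 :&: B i)]|)%N.
  under eq_bigr do rewrite -sum1_card.
  by rewrite pair_big_dep sum1_card cardsE.
rewrite -cardsX -(card_imset _ (inv_inj swapK)) (can_imset_pre _ swapK).
apply: eq_card => -[s x]; rewrite !inE /= ffunE eqxx.
rewrite (Z_local _ s) => [|j]; last by rewrite ffunE => /negbTE ->.
apply/idP/idP.
  case/andP=> /andP[/forallP s'_box ->] si_B.
  apply/andP; split; last by move: (s'_box i); rewrite ffunE eqxx.
  apply/forallP=> j; case: (eqVneq j i) => [->//|neq_ji].
  by move: (s'_box j); rewrite ffunE (negbTE neq_ji).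
case/and3P=> /forallP s_box -> xB; rewrite (s_box i) !andbT.
by apply/forallP=> j; rewrite ffunE; case: eqP => [->|_].
Qed.

Lemma card_box_hits_lt (R : numDomainType) (n : nat) (c : R)
    (Z : I -> {ffun I -> T} -> {set T}) :
    (0 < #|I|)%N -> box != set0 -> (forall i, #|B i| = n) ->
    (forall i (s s' : {ffun I -> T}),
       (forall j, j != i -> s j = s' j) -> Z i s = Z i s') ->
    (forall i s, s \in box -> #|Z i s|%:R < c) ->
  #|[set s in box | [exists i, s i \in Z i s]]|%:R * n%:R
    < #|I|%:R * c * #|box|%:R.
Proof.
move=> /card_gt0P[i0 _] /set0Pn[s0 s0box] cardB Z_local Z_small.
pose hits i := [set s in box | s i \in Z i s].
have hits_lt i : #|hits i|%:R * n%:R < c * #|box|%:R.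
  rewrite -natrM -(cardB i) card_box_hit; last exact: Z_local.
  rewrite natr_sum mulr_natr -sumr_const.
  apply: ltr_sum => [|s sbox]; first by apply/hasP; exists s0; rewrite ?mem_index_enum.
  by apply: le_lt_trans (Z_small i s sbox); rewrite ler_nat subset_leq_card ?subsetIl.
have union : (#|[set s in box | [exists i, s i \in Z i s]]| <= \sum_i #|hits i|)%N.
  rewrite -sum1_card big_mkcond.
  under [X in (_ <= X)%N]eq_bigr do rewrite -sum1_card big_mkcond.
  rewrite [X in (_ <= X)%N]exchange_big /=; apply: leq_sum => s _.
  rewrite inE; case: ifP => // /andP[sbox /existsP[i si]].
  by rewrite (bigD1 i) //= inE sbox si.
apply: (le_lt_trans (y := \sum_i #|hits i|%:R * n%:R)).
  by rewrite -mulr_suml -natr_sum ler_wpM2r ?ler_nat.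
rewrite -mulrA mulr_natl -sumr_const.
by apply: ltr_sum => [|i _]; [apply/hasP; exists i0; rewrite ?mem_index_enum|].
Qed.

End Box.

Definition block (k n : nat) (i : 'I_k) : {set 'I_(k * n)} := [set m | in_block i m].

Lemma card_block (k n : nat) (i : 'I_k) : #|block n i| = n.
Proof.
have shift_lt (x : 'I_n) : (i * n + x < k * n)%N.
  rewrite (leq_trans (_ : _ < i * n + n)%N) ?ltn_add2l //.
  by rewrite -mulSnr leq_mul2r ltn_ord orbT.
have shift_inj : injective (fun x => Ordinal (shift_lt x)).
  by move=> x y /(congr1 val) /addnI /val_inj.
rewrite -[RHS]card_ord -(card_imset _ shift_inj); congr #|pred_of_set _|.
apply/setP=> m; rewrite !inE; apply/andP/imsetP => [[lo hi] | [x _ ->]].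
  have m_lt : (m - i * n < n)%N by rewrite ltn_subLR // addnC.
  by exists (Ordinal m_lt) => //; apply: val_inj; rewrite /= subnKC.
by rewrite /= leq_addr ltn_add2l.
Qed.

Lemma card_box_block (k n : nat) : #|box (@block k n)| = (n ^ k)%N.
Proof.
by rewrite card_box (eq_bigr _ (fun i _ => card_block n i)) prod_nat_const card_ord.
Qed.

Section Pattern.
Variables (k n : nat) (lek : rel 'I_k) (le : rel 'I_(k * n)).
Hypotheses (lek_qo : quasi_order lek) (le_qo : quasi_order le).
Local Notation rho := (rank le).
Local Notation kap := (rank lek).

(* The boolean summand puts the floor strictly above the coordinates below i. *)
Definition rank_floor (s : 'I_k -> 'I_(k * n)) (i : 'I_k) : nat :=
  \max_(j | (j != i) && (kap j <= kap i)%N) (rho (s j) + (kap j < kap i))%N.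

Lemma rank_floor_local (s s' : 'I_k -> 'I_(k * n)) (i : 'I_k) :
  (forall j, j != i -> s j = s' j) -> rank_floor s i = rank_floor s' i.
Proof. by move=> eq_ss'; apply: eq_bigr => j /andP[/eq_ss' ->]. Qed.

Lemma good_tuple_rank (s : {ffun 'I_k -> 'I_(k * n)}) :
  s \in good_tuples lek le ->
  forall i j, (rho (s i) <= rho (s j))%N = (kap i <= kap j)%N.
Proof.
rewrite inE => /andP[_ /forallP s_resp] i j.
by rewrite -!rank_leE //; apply/eqP/(forallP (s_resp i)).
Qed.

Lemma rank_floor_good (s : {ffun 'I_k -> 'I_(k * n)}) (i : 'I_k) :
  s \in good_tuples lek le -> (rank_floor s i <= rho (s i))%N.
Proof.
move=> sG; apply/bigmax_leqP => j /andP[_ le_ji].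
case: ltnP => [lt_ji | _]; last by rewrite addn0 good_tuple_rank.
by rewrite addn1 ltnNge good_tuple_rank // -ltnNge.
Qed.

Definition admissible (s : 'I_k -> 'I_(k * n)) (i : 'I_k) : {set 'I_(k * n)} :=
  [set x in block n i | (rank_floor s i <= rho x)%N].

Definition window (s : 'I_k -> 'I_(k * n)) (i : 'I_k) : {set 'I_(k * n)} :=
  lowset (admissible s i) rho (s i).

Lemma window_sub_block (s : 'I_k -> 'I_(k * n)) (i : 'I_k) :
  {subset window s i <= block n i}.
Proof. by move=> x; rewrite !inE => /andP[/andP[]]. Qed.

Lemma window_respects (s t : 'I_k -> 'I_(k * n)) :
  (forall i, t i \in window s i) -> forall i j, le (t i) (t j) = lek i j.
Proof.
move=> t_in i j; rewrite !rank_leE //.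
have t_window a : (rank_floor s a <= rho (t a) <= rho (s a))%N.
  by move: (t_in a); rewrite !inE => /andP[/andP[_ ->] ->].
have [-> | neq_ij] := eqVneq i j; first by rewrite !leqnn.
have below_floor a b : a != b -> (kap a <= kap b)%N ->
    (rho (t a) + (kap a < kap b) <= rho (t b))%N.
  move=> neq_ab le_ab; have /andP[_ tas] := t_window a.
  have /andP[flb _] := t_window b.
  apply: leq_trans flb; apply: leq_trans (leq_bigmax_cond a _); last by rewrite neq_ab.
  by rewrite leq_add2r.
case: (leqP (kap i) (kap j)) => [le_ij | lt_ji].
  by apply: leq_trans (below_floor i j neq_ij le_ij); rewrite leq_addr.
apply/negbTE; rewrite -ltnNge.
by have := below_floor j i _ (ltnW lt_ji); rewrite lt_ji addn1 eq_sym; apply.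
Qed.

Lemma card_good_tuples_lt (R : numDomainType) (gamma : R) :
    (0 < k)%N -> (0 < n)%N -> 0 < gamma ->
    (forall s, s \in good_tuples lek le -> exists i, #|window s i|%:R < gamma * n%:R) ->
  #|good_tuples lek le|%:R < gamma * k%:R * n%:R ^+ k.
Proof.
move=> k_gt0 n_gt0 gamma_gt0 small_window; set G := good_tuples lek le.
have n_pos : 0 < n%:R :> R by rewrite ltr0n.
have [->|[s0 s0G]] := set_0Vmem G.
  by rewrite cards0 !mulr_gt0 ?exprn_gt0 ?ltr0n.
pose Z i (s : {ffun 'I_k -> 'I_(k * n)}) :=
  [set x in admissible s i | #|lowset (admissible s i) rho x|%:R < gamma * n%:R].
have G_box s : s \in G -> s \in box (@block k n).
  by rewrite !inE => /andP[/forallP s_blocks _]; apply/forallP=> i; rewrite inE.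
have G_hits : G \subset [set s in box (@block k n) | [exists i, s i \in Z i s]].
  apply/subsetP=> s sG; apply/setIdP; split; first exact: G_box.
  have [i small_i] := small_window s sG; apply/existsP; exists i.
  have := G_box s sG; rewrite inE => /forallP/(_ i) s_block.
  by rewrite inE small_i andbT inE s_block rank_floor_good.
have box_nonempty : box (@block k n) != set0.
  by apply/set0Pn; exists s0; exact: G_box.
have Z_local i (s s' : {ffun 'I_k -> 'I_(k * n)}) :
    (forall j, j != i -> s j = s' j) -> Z i s = Z i s'.
  by move=> eq_ss'; rewrite /Z /admissible (rank_floor_local eq_ss').
have Z_small i s : s \in box (@block k n) -> #|Z i s|%:R < gamma * n%:R.
  by move=> _; apply: card_small_lowsets; rewrite mulr_gt0.
have card_k_gt0 : (0 < #|'I_k|)%N by rewrite card_ord.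
have := card_box_hits_lt card_k_gt0 box_nonempty (@card_block k n) Z_local Z_small.
rewrite card_ord card_box_block natrX => hits_lt.
rewrite -(ltr_pM2r n_pos).
rewrite [X in _ < X](_ : _ = k%:R * (gamma * n%:R) * n%:R ^+ k); last by ring.
by apply: le_lt_trans hits_lt; rewrite ler_pM2r // ler_nat subset_leq_card.
Qed.

End Pattern.

Theorem lemma5p6 (R : realFieldType) (k n : nat) (gamma : R)
  (lek : rel 'I_k) (le : rel 'I_(k * n)) :
  (0 < k)%N -> (0 < n)%N -> 0 < gamma ->
  quasi_order lek -> quasi_order le ->
  gamma * k%:R * n%:R ^+ k <= #|good_tuples lek le|%:R ->
  exists S : 'I_k -> {set 'I_(k * n)},
    (forall i, forall m, m \in S i -> @in_block k n i m) /\
    (forall i, gamma * n%:R <= #|S i|%:R) /\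
    (forall s : 'I_k -> 'I_(k * n), (forall i, s i \in S i) ->
       forall i j, le (s i) (s j) = lek i j).
Proof.
move=> k_gt0 n_gt0 gamma_gt0 lek_qo le_qo many_good.
have [/existsP[s /andP[_ /forallP large]] | no_large] :=
  boolP [exists s in good_tuples lek le,
           [forall i, gamma * n%:R <= #|window lek le s i|%:R]].
  exists (window lek le s); split; first by move=> i m /window_sub_block; rewrite inE.
  by split=> // t; apply: window_respects.
have small_window s : s \in good_tuples lek le ->
    exists i, #|window lek le s i|%:R < gamma * n%:R.
  move=> sG; move/existsPn/(_ s): no_large; rewrite sG negb_forall => /existsP[i].
  by rewrite -ltNge; exists i.
have := card_good_tuples_lt lek_qo le_qo k_gt0 n_gt0 gamma_gt0 small_window.
by rewrite ltNge many_good.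
Qed.
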